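(* Let $D$ be a Euclidean domain with fraction field $K$, and let $R$ be the subring of $K$ generated by $\{1/d \mid d \in D\setminus\{0\}\}$. If $D \not\subseteq R$ (equivalently, $R \neq K$), then $R \cap D$ equals the set of units of $D$ together with $0$. In particular, the units of $D$ together with $0$ form a field contained in $D$.
   Context: A Euclidean function on an integral domain $D$ is a function $f: D\setminus\{0\} \to \mathbb{Z}$ such that for all nonzero $a,b \in D$: (1) $f(ab) \geq f(a)$, and (2) there exist $q,r \in D$ with $b = aq + r$ and either $r=0$ or $f(r) < f(a)$. A Euclidean domain is an integral domain admitting a Euclidean function. *)

From HB Require Import structures.
From mathcomp Require Import all_boot all_order all_algebra.
From mathcomp Require Import fraction.
Set Implicit Arguments. Unset Strict Implicit. Unset Printing Implicit Defensive.
Import Order.TTheory GRing.Theory Num.Theory.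
Local Open Scope ring_scope.

Definition euclidean_function (D : idomainType) (f : D -> int) : Prop :=
  forall a b : D, a != 0 -> b != 0 ->
    f a <= f (a * b) /\
    exists q r : D, b = a * q + r /\ (r = 0 \/ f r < f a).

Definition euclidean_domain (D : idomainType) : Prop :=
  exists f : D -> int, euclidean_function f.

Definition is_subring (K : pzRingType) (S : K -> Prop) : Prop :=
  [/\ S 1, (forall x y, S x -> S y -> S (x - y)) &
      (forall x y, S x -> S y -> S (x * y))].

Definition gen_subring (K : pzRingType) (G : K -> Prop) : K -> Prop :=
  fun x => forall S : K -> Prop, is_subring S -> (forall y, G y -> S y) -> S x.

Definition frac_emb (D : idomainType) (d : D) : {fraction D} := FracField.tofrac d.

Definition inv_subring (D : idomainType) : {fraction D} -> Prop :=
  gen_subring (fun y : {fraction D} =>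
                 exists2 d : D, d != 0 & y = (frac_emb d)^-1).

(* If some nonzero nonunit x of D lies in R, then so do all its powers, whose
   Euclidean values f(x^k) >= f(1) + k grow without bound.  For b != 0 pick k
   with f(x^k) >= f(b) and divide: x^k = b q + r with r = 0 or f(r) < f(b).
   By induction on f(b), r lies in R, hence so does b q; and q != 0, so
   b = (b q) (1/q) lies in R.  Thus D is contained in R as soon as R contains a
   nonzero nonunit.  Conversely every unit u of D lies in R, being the inverse
   of 1/u^-1. *)

From HB Require Import structures.
From mathcomp Require Import all_boot all_order all_algebra.
From mathcomp Require Import fraction.
From mathcomp Require Import zify.

Set Implicit Arguments.
Unset Strict Implicit.
Unset Printing Implicit Defensive.
Import Order.TTheory GRing.Theory Num.Theory.
Local Open Scope ring_scope.

Section Subring.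
Variables (K : pzRingType) (S : K -> Prop).
Hypothesis subS : is_subring S.

Lemma subring1 : S 1.
Proof. by case: subS. Qed.

Lemma subringB x y : S x -> S y -> S (x - y).
Proof. by case: subS => _ + _; apply. Qed.

Lemma subringM x y : S x -> S y -> S (x * y).
Proof. by case: subS => _ _; apply. Qed.

Lemma subring0 : S 0.
Proof. by rewrite -(subrr 1); apply: subringB; apply: subring1. Qed.

Lemma subringX x n : S x -> S (x ^+ n).
Proof.
move=> Sx; elim: n => [|n IHn]; first by rewrite expr0; apply: subring1.
by rewrite exprS; apply: subringM.
Qed.

End Subring.

Lemma gen_subring_subring (K : pzRingType) (G : K -> Prop) :
  is_subring (gen_subring G).
Proof.
split=> [S /subring1 //|x y Gx Gy S subS GS|x y Gx Gy S subS GS].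
- exact: subringB (Gx S subS GS) (Gy S subS GS).
- exact: subringM (Gx S subS GS) (Gy S subS GS).
Qed.

Lemma gen_subring_gen (K : pzRingType) (G : K -> Prop) x :
  G x -> gen_subring G x.
Proof. by move=> Gx S _; apply. Qed.

Lemma subring_preim (K L : pzRingType) (phi : {rmorphism K -> L}) (S : L -> Prop) :
  is_subring S -> is_subring (fun x => S (phi x)).
Proof.
move=> subS; split=> [|x y Sx Sy|x y Sx Sy].
- by rewrite rmorph1; apply: subring1.
- by rewrite rmorphB; apply: subringB.
- by rewrite rmorphM; apply: subringM.
Qed.

Section EuclideanFunction.
Variables (D : idomainType) (f : D -> int).
Hypothesis euclid_f : euclidean_function f.

Lemma euclidean_f1_le b : b != 0 -> f 1 <= f b.
Proof. by move=> b0; have [] := euclid_f (oner_neq0 D) b0; rewrite mul1r. Qed.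

(* Dividing y by y x leaves the remainder y (1 - x q), a nonzero multiple of y
   when x is not a unit. *)
Lemma euclidean_lt_mul_nonunit y x :
  y != 0 -> x != 0 -> x \isn't a GRing.unit -> f y < f (y * x).
Proof.
move=> y0 x0 xNU; have yx0 : y * x != 0 by rewrite mulf_neq0.
have [_ [q [r [def_y r_small]]]] := euclid_f yx0 y0.
have xq1 : 1 - x * q != 0.
  apply: contraNneq xNU => /eqP; rewrite subr_eq0 => /eqP xq1.
  by apply/unitrP; exists q; rewrite mulrC.
have def_r : r = y * (1 - x * q).
  by rewrite mulrBr mulr1 mulrA {1}def_y addrAC subrr add0r.
case: r_small => [r0|]; first by move: (mulf_neq0 y0 xq1); rewrite -def_r r0 eqxx.
by rewrite def_r; apply: le_lt_trans; case: (euclid_f y0 xq1).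
Qed.

Lemma euclidean_exp_ge x k :
  x != 0 -> x \isn't a GRing.unit -> f 1 + k%:Z <= f (x ^+ k).
Proof.
move=> x0 xNU; elim: k => [|k IHk]; first by rewrite expr0 addr0.
rewrite exprSr -addn1 PoszD addrA lezD1.
exact: le_lt_trans IHk (euclidean_lt_mul_nonunit (expf_neq0 k x0) x0 xNU).
Qed.

Variable P : D -> Prop.
Hypothesis subP : is_subring P.
Hypothesis cancelP : forall b q, q != 0 -> P (b * q) -> P b.

Lemma euclidean_subring_full x :
  x != 0 -> x \isn't a GRing.unit -> P x -> forall b, P b.
Proof.
move=> x0 xNU Px.
suff P_bounded n b : b != 0 -> f b < f 1 + n%:Z -> P b.
  move=> b; have [->|b0] := eqVneq b 0; first exact: subring0.
  apply: (P_bounded (`|f b - f 1|%N).+1 b b0); move: (euclidean_f1_le b0); lia.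
elim: n b => [|n IHn] b b0 fb; first by move: (euclidean_f1_le b0); lia.
pose k := `|f b - f 1|%N.
have xk0 : x ^+ k != 0 by rewrite expf_neq0.
have fb_le : f b <= f (x ^+ k).
  move: (euclidean_f1_le b0) (euclidean_exp_ge k x0 xNU); rewrite /k; lia.
have [_ [q [r [def_xk r_small]]]] := euclid_f b0 xk0.
have Pr : P r.
  have [->|r0] := eqVneq r 0; first exact: subring0.
  case: r_small => [/eqP|fr]; first by rewrite (negPf r0).
  by apply: IHn r0 _; lia.
have Pbq : P (b * q).
  by have := subringB subP (subringX subP k Px) Pr; rewrite def_xk addrK.
have q0 : q != 0.
  apply: contraTneq fb_le => q0; rewrite q0 mulr0 add0r in def_xk.
  case: r_small => [r0|]; first by move: xk0; rewrite def_xk r0 eqxx.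
  by rewrite -def_xk -ltNge.
exact: cancelP q0 Pbq.
Qed.

End EuclideanFunction.

Section InvSubring.
Variable D : idomainType.

Lemma inv_subring_frac_subring : is_subring (fun d : D => inv_subring (frac_emb d)).
Proof. exact: subring_preim (gen_subring_subring _). Qed.

Lemma inv_subring_frac_inv (d : D) : d != 0 -> inv_subring (frac_emb d)^-1.
Proof. by move=> d0; apply: gen_subring_gen; exists d. Qed.

Lemma inv_subring_frac_unit (u : D) :
  u \is a GRing.unit -> inv_subring (frac_emb u).
Proof.
move=> uU; rewrite /frac_emb -[u]invrK rmorphV ?unitrV //.
apply: inv_subring_frac_inv; rewrite invr_eq0.
by apply: contraTneq uU => ->; rewrite unitr0.
Qed.

Lemma inv_subring_frac_cancelr (b q : D) :
  q != 0 -> inv_subring (frac_emb (b * q)) -> inv_subring (frac_emb b).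
Proof.
move=> q0 Rbq; have -> : frac_emb b = frac_emb (b * q) * (frac_emb q)^-1.
  by rewrite /frac_emb tofracM mulfK // tofrac_eq0.
exact: subringM (gen_subring_subring _) _ _ Rbq (inv_subring_frac_inv q0).
Qed.

End InvSubring.

Theorem proposition2p11 (D : idomainType) :
  euclidean_domain D ->
  (exists d : D, ~ inv_subring (frac_emb d)) ->
  (forall d : D, inv_subring (frac_emb d) <-> (d \is a GRing.unit \/ d = 0)) /\
  (* in particular: units of D together with 0 form a field inside D *)
  (let F := fun d : D => d \is a GRing.unit \/ d = 0 in
   [/\ F 1, (forall x y, F x -> F y -> F (x - y)),
       (forall x y, F x -> F y -> F (x * y)) &
       (forall x, F x -> x != 0 -> F x^-1 /\ x * x^-1 = 1)]).
Proof.
move=> [f euclid_f] [d dNR].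
have subR := inv_subring_frac_subring D.
have inRE (b : D) : inv_subring (frac_emb b) <-> (b \is a GRing.unit \/ b = 0).
  split=> [Rb|[/inv_subring_frac_unit //|->]]; last exact: subring0 subR.
  have [bU|bNU] := boolP (b \is a GRing.unit); first by left.
  have [->|b0] := eqVneq b 0; first by right.
  exfalso; apply: dNR.
  exact (euclidean_subring_full euclid_f subR (@inv_subring_frac_cancelr D) b0 bNU Rb d).
split=> //; split=> [|x y /inRE Rx /inRE Ry|x y /inRE Rx /inRE Ry|x [xU|->] x0].
- by left; apply: unitr1.
- by move: (subringB subR Rx Ry) => /inRE.
- by move: (subringM subR Rx Ry) => /inRE.
- by split; [left; rewrite unitrV | rewrite mulrV].
- by rewrite eqxx in x0.
Qed.
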